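(* For a positive integer $k$, let $\mathcal{H}'_k$ be the random hypergraph with vertex set $[\lceil k\log k\rceil]$ whose edges are $k$ sets $e_1,\dots,e_k$, each chosen independently and uniformly at random from the $k$-element subsets of $[\lceil k\log k\rceil]$. Then, with probability tending to $1$ as $k\to\infty$, for every set $X\subseteq[\lceil k\log k\rceil]$ of size $\lfloor\log^2k-10\log k\log\log k\rfloor$ there are at least $\frac{\log^9 k}{2}$ indices $j$ with $e_j\cap X=\emptyset$.
   Context: $\log$ denotes the natural logarithm; $[m]=\{1,\dots,m\}$. *)

From HB Require Import structures.
From mathcomp Require Import all_boot all_order all_algebra.
From mathcomp Require Import all_classical all_reals all_analysis.
Set Implicit Arguments. Unset Strict Implicit. Unset Printing Implicit Defensive.
Import Order.TTheory GRing.Theory Num.Theory.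
Local Open Scope ring_scope.

(* Number of vertices: ceil(k log k) (nonnegative for every k, so absz is exact). *)
Definition nverts (R : realType) (k : nat) : nat :=
  `| Num.ceil ((k%:R : R) * ln (k%:R : R)) |%N.

(* Size of the test sets X: floor(log^2 k - 10 log k log log k) (an integer,
   possibly negative for small k, in which case no set X has that size). *)
Definition xsize (R : realType) (k : nat) : int :=
  Num.floor (ln (k%:R : R) ^+ 2 - 10 * ln (k%:R : R) * ln (ln (k%:R : R))).

Definition outcome (R : realType) (k : nat) := {ffun 'I_k -> {set 'I_(nverts R k)}}.

Definition admissible (R : realType) (k : nat) : {set outcome R k} :=
  [set e : outcome R k | [forall j, #|e j| == k]].

Definition good (R : realType) (k : nat) : {set outcome R k} :=
  [set e : outcome R k |
     [forall X : {set 'I_(nverts R k)},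
        ((#|X|%:Z == xsize R k) ==>
         ((ln (k%:R : R) ^+ 9 / 2) <= (#|[set j : 'I_k | e j :&: X == finset.set0]|%:R : R)))]].

(* Probability of the good event when e_1,...,e_k are independent and each uniform
   on the k-subsets: uniform measure on admissible outcomes. *)
Definition prob_good (R : realType) (k : nat) : R :=
  #|good R k :&: admissible R k|%:R / #|admissible R k|%:R.

(* Union bound over the test sets X plus an exponential Markov inequality.  If
   M_X counts the edges missing X, then P(M_X < L) <= e^L E[2^-M_X], and by
   independence of the edges E[2^-M_X] = (1 - q/2)^k, where
   q = C(n - s, k) / C(n, k) is the probability that one edge misses X.  Hence
   the bad event has probability at most C(n, s) e^L (1 - q/2)^k.  With
   l = log k, n ~ k l and s <= l^2 - 10 l log l one gets k q >= e^-2 l^10 and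
   C(n, s) <= e^(2 l^3), so for L = l^9/2 the bound is at most e^-l = 1/k once
   l >= 4 e^2 (which makes e^-2 l^10 / 2 >= 2 l^9 dominate). *)

From mathcomp Require Import all_boot all_order all_algebra.
From mathcomp Require Import all_classical all_reals all_analysis.
From mathcomp Require Import ring lra zify.
Import Order.TTheory GRing.Theory Num.Theory.
Import numFieldNormedType.Exports.
Set Implicit Arguments. Unset Strict Implicit. Unset Printing Implicit Defensive.
Local Open Scope ring_scope.

Section ExponentialMoment.
Variable R : realType.
Variables T I : finType.

Lemma sum_prod_ffun_draws (k : nat) (g : {set T} -> R) :
  \sum_(e : {ffun I -> {set T}} | [forall j, #|e j| == k]) \prod_j g (e j)
  = (\sum_(S : {set T} | #|S| == k) g S) ^+ #|I|.
Proof.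
rewrite -prodr_const bigA_distr_big; apply: eq_bigl => e.
by apply/forallP/familyP => H j; apply: H.
Qed.

Lemma card_draws_disjoint (k : nat) (X : {set T}) :
  #|[set S : {set T} | #|S| == k & S :&: X == finset.set0]| = 'C(#|T| - #|X|, k).
Proof.
rewrite -(cardsC X) addKn -cards_draws; apply: eq_card => S.
by rewrite !inE finset.setI_eq0 finset.disjoints_subset andbC.
Qed.

Definition miss_weight (X S : {set T}) : R := 1 - (S :&: X == finset.set0)%:R / 2.

Lemma miss_weight_ge0 (X S : {set T}) : 0 <= miss_weight X S.
Proof. by rewrite /miss_weight; case: (_ == _) => /=; lra. Qed.

Lemma prod_miss_weight (e : I -> {set T}) (X : {set T}) :
  \prod_j miss_weight X (e j) = 2^-1 ^+ #|[set j | e j :&: X == finset.set0]|.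
Proof.
rewrite (bigID (fun j => e j :&: X == finset.set0)) /=.
rewrite [X in _ * X]big1 ?mulr1 => [|j /negbTE E]; last by rewrite /miss_weight E /=; lra.
rewrite -prodr_const; apply: eq_big => [j | j E]; first by rewrite inE.
by rewrite /miss_weight E /=; lra.
Qed.

Lemma sum_miss_weight (k : nat) (X : {set T}) :
  \sum_(S : {set T} | #|S| == k) miss_weight X S
  = 'C(#|T|, k)%:R - 'C(#|T| - #|X|, k)%:R / 2.
Proof.
rewrite sumrB -mulr_suml.
rewrite [X in _ - X / 2](eq_bigr (fun S => if S :&: X == finset.set0 then 1 else 0)).
  rewrite -big_mkcondr !sumr_const -card_draws -card_draws_disjoint.
  by congr (_%:R - _%:R / 2); apply: eq_card => S; rewrite inE.
by move=> S _; case: (_ == _).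
Qed.

Lemma expR_mul_halfX_ge1 (m : nat) (L : R) : m%:R < L -> 1 <= expR L * 2^-1 ^+ m.
Proof.
move=> mL; rewrite exprVn ler_pdivlMr ?exprn_gt0 // mul1r.
have two_le_e : (2 : R) <= expR 1 by have := expR_ge1Dx (1 : R); rewrite -[1 + 1]/2%:R.
apply: (@le_trans _ _ (expR 1 ^+ m)); first by apply: lerXn2r; rewrite ?nnegrE.
by rewrite -expRM_natl mulr1 ler_expR ltW.
Qed.

Definition few_misses (k s : nat) (L : R) : {set {ffun I -> {set T}}} :=
  [set e : {ffun I -> {set T}} | [forall j, #|e j| == k] &&
     [exists X : {set T}, (#|X| == s) &&
        (#|[set j | e j :&: X == finset.set0]|%:R < L)]].

Lemma card_few_misses_le (k s : nat) (L : R) :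
  #|few_misses k s L|%:R
  <= 'C(#|T|, s)%:R * expR L * ('C(#|T|, k)%:R - 'C(#|T| - s, k)%:R / 2) ^+ #|I|.
Proof.
set B := few_misses k s L.
pose F (e : {ffun I -> {set T}}) (X : {set T}) := expR L * \prod_j miss_weight X (e j).
have F_ge0 e X : 0 <= F e X.
  by rewrite mulr_ge0 ?expR_ge0 // prodr_ge0 // => j _; apply: miss_weight_ge0.
have le1F e : e \in B -> 1 <= \sum_(X : {set T} | #|X| == s) F e X.
  rewrite inE => /andP[_ /existsP[X /andP[sX few]]].
  rewrite (bigD1 X) //= -[1]addr0; apply: lerD; last exact: sumr_ge0.
  by rewrite /F prod_miss_weight; apply: expR_mul_halfX_ge1.
apply: (@le_trans _ _ (\sum_(e : {ffun I -> {set T}} | [forall j, #|e j| == k])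
                         \sum_(X : {set T} | #|X| == s) F e X)).
  rewrite -sumr_const big_mkcond [X in _ <= X]big_mkcond /=; apply: ler_sum => e _.
  have [eB | _] := boolP (e \in B); last by case: ifP => _ //; apply: sumr_ge0.
  by move: (eB); rewrite inE => /andP[-> _]; apply: le1F.
rewrite exchange_big /=.
rewrite (eq_bigr (fun=> expR L * ('C(#|T|, k)%:R - 'C(#|T| - s, k)%:R / 2) ^+ #|I|)).
  have cardXs : #|[pred X : {set T} | #|X| == s]| = 'C(#|T|, s).
    by rewrite -card_draws; apply: eq_card => X; rewrite inE.
  by rewrite sumr_const cardXs -mulrA [X in _ <= X]mulr_natl.
by move=> X /eqP sX; rewrite -mulr_sumr sum_prod_ffun_draws sum_miss_weight sX.
Qed.
End ExponentialMoment.

Lemma bin_le_expn (n s : nat) : ('C(n, s) <= n ^ s)%N.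
Proof.
apply: leq_trans (_ : _ <= 'C(n, s) * s`!)%N _; first by rewrite leq_pmulr ?fact_gt0.
rewrite bin_ffact ffact_prod.
apply: leq_trans (_ : _ <= \prod_(i < s) n)%N _; last by rewrite prod_nat_const card_ord.
by apply: leq_prod => i _; apply: leq_subr.
Qed.

Section BinomialEstimates.
Variable R : realType.

Lemma bin_predn_ratio (m k : nat) : (0 < m)%N -> (k <= m)%N ->
  'C(m.-1, k)%:R = (1 - k%:R / m%:R) * ('C(m, k)%:R : R).
Proof.
move=> m_gt0 km; have mR : (m%:R : R) != 0 by rewrite pnatr_eq0 -lt0n.
have /(congr1 (fun x => x%:R : R)) := mul_bin_down m k.
rewrite !natrM natrB // => E.
by apply: (mulfI mR); rewrite E; field.
Qed.

Lemma bin_subn_ge_pow (n s k : nat) : (k + s < n)%N ->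
  'C(n, k)%:R * (1 - k%:R / (n - s)%:R) ^+ s <= ('C(n - s, k)%:R : R).
Proof.
move=> kDs_lt_n; set x : R := k%:R / (n - s)%:R.
have x_le1 : x <= 1 by rewrite ler_pdivrMr ?ltr0n ?mul1r ?ler_nat; lia.
suff /(_ s (leqnn s)) : forall i, (i <= s)%N ->
  'C(n, k)%:R * (1 - x) ^+ i <= ('C(n - i, k)%:R : R) by [].
elim=> [|i IHi] i_lt_s; first by rewrite mulr1 subn0.
rewrite subnS bin_predn_ratio; [|lia|lia].
rewrite exprS mulrCA; apply: ler_pM; rewrite ?subr_ge0 ?mulr_ge0 ?exprn_ge0 ?subr_ge0 //.
  rewrite lerD2l lerN2; apply: ler_wpM2l => //.
  by rewrite lef_pV2 ?posrE ?ltr0n ?ler_nat; lia.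
exact/IHi/ltnW.
Qed.

Lemma expR_le_pow_1B (x : R) (s : nat) : 0 <= x < 1 ->
  expR (- (s%:R * (x / (1 - x)))) <= (1 - x) ^+ s.
Proof.
case/andP=> x_ge0 x_lt1; have x1_gt0 : 0 < 1 - x by rewrite subr_gt0.
rewrite -mulrN expRM_natl; apply: lerXn2r; rewrite ?nnegrE ?expR_ge0 //; first exact: ltW.
rewrite expRN -[X in _ <= X]invrK lef_pV2 ?posrE ?invr_gt0 ?expR_gt0 //.
rewrite [X in X <= _](_ : _ = 1 + x / (1 - x)) ?expR_ge1Dx //.
by field; rewrite gt_eqF.
Qed.

Lemma pow_1B_le_expR (z : R) (k : nat) : z <= 1 -> (1 - z) ^+ k <= expR (- (k%:R * z)).
Proof.
move=> z_le1; rewrite -mulrN expRM_natl.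
by apply: lerXn2r; rewrite ?nnegrE ?expR_ge0 ?subr_ge0 ?expR_ge1Dx.
Qed.

Lemma bin_subn_ge_expR (n s k : nat) : (k + s < n)%N ->
  'C(n, k)%:R * expR (- (s%:R * (k%:R / (n - s - k)%:R))) <= ('C(n - s, k)%:R : R).
Proof.
move=> kDs_lt_n; apply: le_trans (bin_subn_ge_pow kDs_lt_n).
set x : R := k%:R / (n - s)%:R.
have ns_gt0 : (0 : R) < (n - s)%:R by rewrite ltr0n; lia.
have x_lt1 : x < 1 by rewrite /x ltr_pdivrMr // mul1r ltr_nat; lia.
have -> : k%:R / (n - s - k)%:R = x / (1 - x).
  rewrite [(n - s - k)%:R]natrB /x; last lia.
  by field; rewrite gt_eqF // gt_eqF // subr_gt0 ltr_nat; lia.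
by apply: ler_wpM2l => //; rewrite expR_le_pow_1B // x_lt1 divr_ge0.
Qed.
End BinomialEstimates.

Section MainEstimate.
Variable R : realType.

Lemma ge12_of_large (l : R) : 4 * expR 2 <= l -> 12 <= l.
Proof. by have := expR_ge1Dx (2 : R); lra. Qed.

Lemma ln_ge1_of_large (l : R) : 4 * expR 2 <= l -> 1 <= ln l.
Proof.
move=> l_large; have l_ge12 := ge12_of_large l_large.
rewrite -[1]expRK ler_ln ?posrE ?expR_gt0 //; last lra.
have : expR 1 <= expR 2 :> R by rewrite ler_expR; lra.
by have := expR_gt0 (1 : R); lra.
Qed.

Lemma union_exponent_le (l : R) : 4 * expR 2 <= l ->
  2 * l ^+ 3 + l ^+ 9 / 2 - l ^+ 10 * expR (-2) / 2 <= - l.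
Proof.
move=> l_large; have l_ge12 := ge12_of_large l_large.
have l2_ge1 : 1 <= l ^+ 2 by rewrite exprn_ege1 //; lra.
have l3_ge_l : l <= l ^+ 3 by rewrite exprS; nra.
have l5_ge1 : 1 <= l ^+ 5 by rewrite exprn_ege1 //; lra.
have l6_ge3 : 3 <= l ^+ 6 by rewrite exprS; nra.
have l9_ge : 3 * l ^+ 3 <= l ^+ 9.
  rewrite (_ : 9 = 6 + 3)%N // exprD; apply: ler_wpM2r => //.
  by rewrite exprn_ge0 //; lra.
have l_e2 : 4 <= l * expR (-2) by rewrite expRN ler_pdivlMr ?expR_gt0.
have l10_ge : 4 * l ^+ 9 <= l ^+ 10 * expR (-2).
  have l9_ge0 : 0 <= l ^+ 9 by rewrite exprn_ge0 //; lra.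
  by rewrite exprSr -mulrA; nra.
lra.
Qed.

Lemma le_sqr_of_le_xsize_bound (x l : R) : 0 <= l -> 0 <= ln l ->
  x <= l ^+ 2 - 10 * l * ln l -> x <= l ^+ 2.
Proof.
move=> l_ge0 lnl_ge0; have : 0 <= 10 * l * ln l by rewrite !mulr_ge0.
lra.
Qed.

Lemma sqr_le_expR (l : R) : 6 <= l -> l ^+ 2 <= expR l.
Proof.
move=> l_ge6; have l_ge0 : 0 <= l by lra.
have := expR_ge1Dxn 2 l_ge0; rewrite (_ : 3`!%:R = 6 :> R) // exprS.
have : 0 <= l ^+ 2 by rewrite exprn_ge0.
nra.
Qed.

Lemma addn_lt_of_expR_le (k n s : nat) (l : R) : k%:R = expR l -> 6 <= l ->
  k%:R * l <= n%:R -> s%:R <= l ^+ 2 -> (k + s < n)%N.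
Proof.
move=> k_expR l_ge6 n_ge s_le.
have k_gt0 : (0 : R) < k%:R by rewrite k_expR expR_gt0.
have := sqr_le_expR l_ge6; rewrite -k_expR => l2_le_k.
by rewrite -(ltr_nat R) natrD; nra.
Qed.

Lemma bin_ratio_ge (k n s : nat) (l : R) : k%:R = expR l -> 4 * expR 2 <= l ->
  k%:R * l <= n%:R -> s%:R <= l ^+ 2 - 10 * l * ln l ->
  l ^+ 10 * expR (-2) <= k%:R * ('C(n - s, k)%:R / 'C(n, k)%:R).
Proof.
move=> k_expR l_large n_ge s_le.
have l_ge12 := ge12_of_large l_large; have ln_l_ge1 := ln_ge1_of_large l_large.
have k_gt0 : (0 : R) < k%:R by rewrite k_expR expR_gt0.
have s_le_l2 : s%:R <= l ^+ 2 by apply: le_sqr_of_le_xsize_bound s_le; lra.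
have l_ge6 : 6 <= l by lra.
have s_le_k : s%:R <= k%:R :> R by rewrite k_expR (le_trans s_le_l2 (sqr_le_expR l_ge6)).
have kDs := addn_lt_of_expR_le k_expR l_ge6 n_ge s_le_l2.
have N_gt0 : (0 : R) < 'C(n, k)%:R by rewrite ltr0n bin_gt0; lia.
have := bin_subn_ge_expR R kDs; set D : R := (n - s - k)%:R => Q_ge.
have D_ge : k%:R * (l - 2) <= D.
  by rewrite /D -subnDA natrB ?natrD; [nra | lia].
have D_gt0 : 0 < D by apply: lt_le_trans D_ge; rewrite mulr_gt0 //; lra.
have s_ge0 : (0 : R) <= s%:R by [].
have l_ge_lnl : 10 * ln l <= l.
  have : 0 <= l * (l - 10 * ln l) by rewrite mulrBr -expr2 mulrA [l * 10]mulrC; lra.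
  by nra.
have s_le_prod : s%:R <= (l - 10 * ln l + 2) * (l - 2) by nra.
have expo_le : s%:R * (k%:R / D) <= l - 10 * ln l + 2.
  rewrite mulrA ler_pdivrMr //.
  apply: le_trans (_ : _ <= (l - 10 * ln l + 2) * (k%:R * (l - 2))) _.
    by rewrite mulrC mulrCA ler_wpM2l // ltW.
  by apply: ler_wpM2l => //; lra.
have -> : l ^+ 10 * expR (-2) = k%:R * expR (- (l - 10 * ln l + 2)).
  rewrite k_expR -expRD (_ : l + _ = 10%:R * ln l + -2); last by ring.
  by rewrite expRD expRM_natl lnK // posrE; lra.
apply: ler_wpM2l; first exact: ltW.
rewrite ler_pdivlMr // mulrC; apply: le_trans Q_ge; apply: ler_wpM2l; first exact: ltW.
by rewrite ler_expR lerN2.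
Qed.

Lemma bin_le_expR_cube (k n s : nat) (l : R) : k%:R = expR l -> 0 <= l ->
  n%:R <= k%:R * l + 1 -> s%:R <= l ^+ 2 -> 'C(n, s)%:R <= expR (2 * l ^+ 3).
Proof.
move=> k_expR l_ge0 n_le s_le.
have k_ge : 1 + l <= k%:R by rewrite k_expR expR_ge1Dx.
have n_le_k2 : n%:R <= k%:R ^+ 2 :> R by rewrite expr2; nra.
apply: le_trans (_ : _ <= n%:R ^+ s) _; first by rewrite -natrX ler_nat bin_le_expn.
apply: le_trans (_ : _ <= (k%:R ^+ 2) ^+ s) _.
  by apply: lerXn2r; rewrite // nnegrE ?ler0n ?exprn_ge0.
rewrite k_expR -exprM -expRM_natl ler_expR natrM exprS.
have : 0 <= l ^+ 2 by rewrite exprn_ge0.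
nra.
Qed.

Lemma union_bound_le_invn (k n s : nat) (l : R) : k%:R = expR l -> 4 * expR 2 <= l ->
  k%:R * l <= n%:R -> n%:R <= k%:R * l + 1 -> s%:R <= l ^+ 2 - 10 * l * ln l ->
  'C(n, s)%:R * expR (l ^+ 9 / 2) * (1 - 'C(n - s, k)%:R / (2 * 'C(n, k)%:R)) ^+ k
  <= k%:R^-1.
Proof.
move=> k_expR l_large n_ge n_le s_le.
have l_ge12 := ge12_of_large l_large; have ln_l_ge1 := ln_ge1_of_large l_large.
have s_le_l2 : s%:R <= l ^+ 2 by apply: le_sqr_of_le_xsize_bound s_le; lra.
have kDs : (k + s < n)%N by apply: addn_lt_of_expR_le k_expR _ n_ge s_le_l2; lra.
have N_gt0 : (0 : R) < 'C(n, k)%:R by rewrite ltr0n bin_gt0; lia.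
have Q_le_N : ('C(n - s, k)%:R : R) <= 'C(n, k)%:R by rewrite ler_nat leq_bin2l ?leq_subr.
have ratio_ge := bin_ratio_ge k_expR l_large n_ge s_le.
have miss_le1 : 'C(n - s, k)%:R / (2 * 'C(n, k)%:R) <= 1 :> R.
  by rewrite ler_pdivrMr ?mulr_gt0 // mul1r; lra.
have pow_le : (1 - 'C(n - s, k)%:R / (2 * 'C(n, k)%:R)) ^+ k
              <= expR (- (l ^+ 10 * expR (-2) / 2)).
  apply: le_trans (pow_1B_le_expR _ miss_le1) _; rewrite ler_expR lerN2.
  by rewrite invfM mulrCA mulrA; lra.
apply: le_trans (_ : _ <= expR (2 * l ^+ 3) * expR (l ^+ 9 / 2)
                          * expR (- (l ^+ 10 * expR (-2) / 2))) _.
  apply: ler_pM.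
  - by rewrite mulr_ge0 ?expR_ge0.
  - by rewrite exprn_ge0 // subr_ge0.
  - apply: ler_wpM2r; first exact: expR_ge0.
    by apply: bin_le_expR_cube k_expR _ n_le s_le_l2; lra.
  - exact: pow_le.
rewrite -!expRD k_expR -expRN ler_expR.
by have := union_exponent_le l_large; lra.
Qed.
End MainEstimate.

Section Model.
Variable R : realType.

Lemma nverts_bounds (k : nat) : 0 <= ln (k%:R : R) ->
  k%:R * ln k%:R <= (nverts R k)%:R :> R /\ (nverts R k)%:R <= k%:R * ln k%:R + 1 :> R.
Proof.
move=> ln_ge0; have x_ge0 : 0 <= k%:R * ln (k%:R : R) by rewrite mulr_ge0.
rewrite /nverts natr_absz ger0_norm ?ceil_ge0; last lra.
split; first exact: ceil_ge.
by have := ceilB1_lt (k%:R * ln (k%:R : R)); rewrite intrB; lra.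
Qed.

Lemma card_admissible (k : nat) : #|admissible R k| = ('C(nverts R k, k) ^ k)%N.
Proof.
have := card_ffun_on 'I_k [set S : {set 'I_(nverts R k)} | #|S| == k].
rewrite card_draws !card_ord => <-.
apply: eq_card => e; rewrite inE; apply/forallP/ffun_onP => e_k j; first by rewrite inE e_k.
by move: (e_k j); rewrite inE.
Qed.

Lemma prob_good_eq (k : nat) : (0 < #|admissible R k|)%N ->
  prob_good R k = 1 - #|admissible R k :\: good R k|%:R / #|admissible R k|%:R.
Proof.
move=> A_gt0; apply/eqP; rewrite eq_sym subr_eq /prob_good -mulrDl -natrD finset.setIC.
by rewrite cardsID divff // pnatr_eq0 -lt0n.
Qed.

Lemma bad_subset_few_misses (k s : nat) : xsize R k = s%:Z ->
  admissible R k :\: good R k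
  \subset few_misses 'I_(nverts R k) 'I_k k s (ln (k%:R : R) ^+ 9 / 2).
Proof.
move=> xsize_s; apply/fintype.subsetP => e; rewrite !inE => /andP[/forallPn[X]].
rewrite negb_imply -ltNge xsize_s eqz_nat => /andP[X_s few] ->.
by apply/existsP; exists X; rewrite X_s few.
Qed.

Lemma bad_eq0 (k : nat) : xsize R k < 0 -> admissible R k :\: good R k = finset.set0.
Proof.
move=> xsize_neg; apply/finset.setP => e; rewrite !inE.
apply/negbTE; rewrite negb_and negbK; apply/orP; left; apply/forallP => X.
by rewrite eq_sym lt_eqF //; apply: lt_le_trans xsize_neg _.
Qed.

Lemma bad_ratio_le (k : nat) : 4 * expR 2 <= ln (k%:R : R) ->
  (0 < #|admissible R k|)%N /\
  #|admissible R k :\: good R k|%:R / #|admissible R k|%:R <= k%:R^-1 :> R.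
Proof.
set l := ln (k%:R : R) => l_large; have l_ge12 := ge12_of_large l_large.
have k_gt0 : (0 < k)%N.
  by rewrite lt0n; apply/negP => /eqP k0; move: l_ge12; rewrite /l k0 ln0 //; lra.
have k_expR : k%:R = expR l by rewrite lnK // posrE ltr0n.
have l_ge0 : 0 <= l by lra.
have [n_ge n_le] := nverts_bounds l_ge0; rewrite -/l in n_ge n_le.
have k_le_n : (k <= nverts R k)%N.
  by rewrite -(ler_nat R); apply: le_trans n_ge; rewrite ler_peMr //; lra.
have N_gt0 : (0 < 'C(nverts R k, k))%N by rewrite bin_gt0.
have A_gt0 : (0 < #|admissible R k|)%N by rewrite card_admissible expn_gt0 N_gt0.
split => //; rewrite ler_pdivrMr ?ltr0n //.
have [xsize_neg | xsize_ge0] := ltP (xsize R k) 0.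
  by rewrite bad_eq0 // cards0 mulr_ge0 ?invr_ge0.
set s := `|xsize R k|%N; have xsize_s : xsize R k = s%:Z by rewrite gez0_abs.
have s_le : s%:R <= l ^+ 2 - 10 * l * ln l.
  by rewrite -[s%:R]/((s%:Z)%:~R : R) -xsize_s floor_le.
have := @card_few_misses_le R 'I_(nverts R k) 'I_k k s (l ^+ 9 / 2).
rewrite !card_ord => few_le.
have := subset_leq_card (bad_subset_few_misses xsize_s); rewrite -(ler_nat R) => bad_le.
apply: le_trans bad_le _; apply: le_trans few_le _.
set N : R := 'C(nverts R k, k)%:R; set Q : R := 'C(nverts R k - s, k)%:R.
have N_ne0 : N != 0 by rewrite pnatr_eq0 -lt0n.
have -> : N - Q / 2 = (1 - Q / (2 * N)) * N by field.
rewrite card_admissible natrX -/N exprMn mulrA; apply: ler_wpM2r; first exact: exprn_ge0.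
exact: union_bound_le_invn.
Qed.
End Model.

Local Open Scope classical_set_scope.

Lemma ln_natr_ge_near (R : realType) (a : R) : \forall k \near \oo, a <= ln (k%:R : R).
Proof.
apply: filterS (nbhs_infty_ger (expR a)) => k a_le_k.
by rewrite -ler_expR lnK // posrE (lt_le_trans (expR_gt0 a)).
Qed.

Lemma invn_le_twice_harmonic (R : realType) (k : nat) : k%:R^-1 <= 2 * harmonic k :> R.
Proof.
case: k => [|k]; first by rewrite invr0 mulr_ge0 ?harmonic_ge0.
rewrite /= -[2]invrK -invfM lef_pV2 ?posrE ?mulr_gt0 ?invr_gt0 ?ltr0n //.
by rewrite ler_pdivrMl // -natrM ler_nat; lia.
Qed.

Theorem lemma1 (R : realType) : (fun k : nat => prob_good R k) @ \oo --> (1 : R).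
Proof.
apply: (@squeeze_cvgr _ _ _ _ (fun k => 1 - 2 * harmonic k) (fun=> 1)); last first.
- exact: cvg_cst.
- rewrite -[X in _ --> X]subr0 -(mulr0 2).
  by apply: cvgB; [exact: cvg_cst | exact: cvgMl_tmp cvg_harmonic].
apply: filterS (ln_natr_ge_near (4 * expR 2)) => k /bad_ratio_le[A_gt0 ratio_le].
rewrite (prob_good_eq A_gt0); have := invn_le_twice_harmonic R k.
have : 0 <= #|admissible R k :\: good R k|%:R / #|admissible R k|%:R :> R.
  by rewrite divr_ge0.
lra.
Qed.
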